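(* Let $X=C_1\cup C_2$ be the Alexandroff double circle. Then $X$ is a compact Hausdorff first-countable space, $C_1\in\mathsf{K}(X)$, but the Smyth power space $P_S(X)$ is not first-countable; in fact $C_1$ has no countable neighborhood base in $P_S(X)$.
   Context: In $\mathbb R^2$ let $C_i=\{(x,y): x^2+y^2=i\}$ for $i=1,2$, $X=C_1\cup C_2$, and let $p:C_1\to C_2$ be the radial projection from the origin. Topologize $X$ by neighborhood bases: for $z\in C_2$ the base is $\{\{z\}\}$; for $z\in C_1$ the base is $\{U_j(z): j\in\mathbb N\}$ with $U_j(z)=V_j\cup p(V_j\setminus\{z\})$, where $V_j$ is the arc of $C_1$ centered at $z$ of length $1/j$. $\mathsf{K}(X)$ is the set of nonempty compact saturated subsets of $X$ (for a $T_1$ space, all nonempty compact subsets). For open $U$, $\Box U=\{K\in\mathsf{K}(X):K\subseteq U\}$; the Smyth power space $P_S(X)$ is $\mathsf{K}(X)$ with the topology having base $\{\Box U: U\text{ open}\}$. *)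

From Stdlib Require Import Reals List.
Open Scope R_scope.

Definition subset {T : Type} (A B : T -> Prop) : Prop := forall x, A x -> B x.

Definition compact_set {T : Type} (O : (T -> Prop) -> Prop) (A : T -> Prop) : Prop :=
  forall F : (T -> Prop) -> Prop,
    (forall U, F U -> O U) ->
    (forall x, A x -> exists U, F U /\ U x) ->
    exists l : list (T -> Prop),
      (forall U, In U l -> F U) /\ (forall x, A x -> exists U, In U l /\ U x).

Definition hausdorff {T : Type} (S : T -> Prop) (O : (T -> Prop) -> Prop) : Prop :=
  forall x y, S x -> S y -> x <> y ->
    exists U V, O U /\ O V /\ U x /\ V y /\ (forall z, U z -> V z -> False).

Definition nbhd {T : Type} (S : T -> Prop) (O : (T -> Prop) -> Prop) (x : T)
  (N : T -> Prop) : Prop :=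
  subset N S /\ exists U, O U /\ U x /\ subset U N.

Definition countable_nbhd_base {T : Type} (S : T -> Prop) (O : (T -> Prop) -> Prop)
  (x : T) (B : nat -> T -> Prop) : Prop :=
  (forall n, nbhd S O x (B n)) /\
  (forall U, O U -> U x -> exists n, subset (B n) U).

Definition has_countable_nbhd_base {T : Type} (S : T -> Prop)
  (O : (T -> Prop) -> Prop) (x : T) : Prop :=
  exists B : nat -> T -> Prop, countable_nbhd_base S O x B.

Definition first_countable {T : Type} (S : T -> Prop) (O : (T -> Prop) -> Prop) : Prop :=
  forall x, S x -> has_countable_nbhd_base S O x.

Definition saturated {T : Type} (O : (T -> Prop) -> Prop) (A : T -> Prop) : Prop :=
  forall x, (forall U, O U -> subset A U -> U x) -> A x.

Definition KX {T : Type} (S : T -> Prop) (O : (T -> Prop) -> Prop) (K : T -> Prop) : Prop :=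
  subset K S /\ (exists x, K x) /\ compact_set O K /\ saturated O K.

Definition box {T : Type} (S : T -> Prop) (O : (T -> Prop) -> Prop) (U : T -> Prop)
  : (T -> Prop) -> Prop :=
  fun K => KX S O K /\ subset K U.

(** Open sets of the Smyth power space: the topology on K(X) with base
    { Box U | U open } (i.e. unions of basic sets). *)
Definition smyth_open {T : Type} (S : T -> Prop) (O : (T -> Prop) -> Prop)
  (W : (T -> Prop) -> Prop) : Prop :=
  forall K, W K -> exists U, O U /\ box S O U K /\ subset (box S O U) W.

Definition pt := (R * R)%type.

Definition Circ1 (z : pt) : Prop := fst z ^ 2 + snd z ^ 2 = 1.
Definition Circ2 (z : pt) : Prop := fst z ^ 2 + snd z ^ 2 = 2.
Definition Xset (z : pt) : Prop := Circ1 z \/ Circ2 z.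

Definition proj (z : pt) : pt := (sqrt 2 * fst z, sqrt 2 * snd z).

(** V_j(z): open arc of Circ1 centered at z of length 1/j (j >= 1; here j is
    represented as S j for j : nat), i.e. points of Circ1 at arc-distance
    < 1/(2j) from z. The arc distance between unit vectors z, w is acos(z.w). *)
Definition Varc (j : nat) (z : pt) (w : pt) : Prop :=
  Circ1 w /\ acos (fst z * fst w + snd z * snd w) < / (2 * INR (S j)).

Definition Unbhd (j : nat) (z : pt) (w : pt) : Prop :=
  Varc j z w \/ exists v, Varc j z v /\ v <> z /\ w = proj v.

(** Topology on X generated by the neighborhood bases:
    {{z}} for z in Circ2, {U_j(z) | j} for z in Circ1. *)
Definition X_open (U : pt -> Prop) : Prop :=
  subset U Xset /\
  forall z, U z -> (Circ2 z \/ (Circ1 z /\ exists j, subset (Unbhd j z) U)).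

Definition PS_carrier : (pt -> Prop) -> Prop := KX Xset X_open.
Definition PS_open : ((pt -> Prop) -> Prop) -> Prop := smyth_open Xset X_open.

From Stdlib Require Import Reals List Lra Lia Psatz Classical ClassicalEpsilon Cantor.
Open Scope R_scope.

(** The arc neighbourhoods of finitely many points of [Circ1] cover [Circ1] (Heine-Borel on
    [[0, 2 PI]], arcs being open for the chord metric), and they also cover all of [Circ2] except
    the projections of their finitely many centres; so [X] is compact, and every open [U]
    containing [Circ1] omits only finitely many points of the discrete circle [Circ2].
    A countable neighbourhood base of [Circ1] in the Smyth power space would give countably many
    such [U_n]; as [Circ2] is uncountable, some [y] in [Circ2] lies in every [U_n], and then
    [Circ1 ∪ {y}] lies in every basic neighbourhood but not in the open [Box (X \ {y})]. *)

Definition dist2 (z w : pt) : R := (fst z - fst w) ^ 2 + (snd z - snd w) ^ 2.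
Definition edist (z w : pt) : R := sqrt (dist2 z w).

Lemma dist2_ge0 z w : 0 <= dist2 z w.
Proof.
  unfold dist2; pose proof (pow2_ge_0 (fst z - fst w)); pose proof (pow2_ge_0 (snd z - snd w)); lra.
Qed.

Lemma edist_sym z w : edist z w = edist w z.
Proof. unfold edist, dist2; f_equal; ring. Qed.

Lemma edist_xx z : edist z z = 0.
Proof. unfold edist, dist2; rewrite <- sqrt_0; f_equal; ring. Qed.

Lemma edist_gt0 z w : z <> w -> 0 < edist z w.
Proof.
  intros Hzw; apply sqrt_lt_R0.
  destruct (Rle_lt_or_eq_dec _ _ (dist2_ge0 z w)) as [|E]; [assumption|].
  exfalso; apply Hzw; destruct z as [a b], w as [c d]; unfold dist2 in E; simpl in E.
  destruct (Rplus_sqr_eq_0 (a - c) (b - d)) as [H1 H2]; [unfold Rsqr; lra|].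
  f_equal; lra.
Qed.

Lemma edist_triangle a b c : edist a c <= edist a b + edist b c.
Proof.
  unfold edist, dist2.
  set (x1 := fst a - fst b); set (x2 := snd a - snd b).
  set (y1 := fst b - fst c); set (y2 := snd b - snd c).
  replace (fst a - fst c) with (x1 + y1) by (unfold x1, y1; ring).
  replace (snd a - snd c) with (x2 + y2) by (unfold x2, y2; ring).
  set (s := sqrt (x1 ^ 2 + x2 ^ 2)); set (t := sqrt (y1 ^ 2 + y2 ^ 2)).
  assert (Hs : 0 <= s) by apply sqrt_pos. assert (Ht : 0 <= t) by apply sqrt_pos.
  assert (Hs2 : s ^ 2 = x1 ^ 2 + x2 ^ 2) by (apply pow2_sqrt; nra).
  assert (Ht2 : t ^ 2 = y1 ^ 2 + y2 ^ 2) by (apply pow2_sqrt; nra).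
  assert (Cauchy_Schwarz : x1 * y1 + x2 * y2 <= s * t).
  { assert ((s * t) ^ 2 - (x1 * y1 + x2 * y2) ^ 2 = (x1 * y2 - x2 * y1) ^ 2)
      by (replace ((s * t) ^ 2) with (s ^ 2 * t ^ 2) by ring; rewrite Hs2, Ht2; ring).
    pose proof (pow2_ge_0 (x1 * y2 - x2 * y1)); assert (0 <= s * t) by nra; nra. }
  rewrite <- (sqrt_pow2 (s + t)) by lra.
  apply sqrt_le_1_alt; nra.
Qed.

(** [Varc j z] is the ball of radius [arc_chord j] around [z] in the chord metric: [arc_chord j]
    is the chord subtending the arc [arc_angle j]. *)
Definition arc_angle (j : nat) : R := / (2 * INR (S j)).
Definition arc_chord (j : nat) : R := sqrt (2 - 2 * cos (arc_angle j)).

Lemma arc_angle_bounds j : 0 < arc_angle j <= / 2.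
Proof.
  unfold arc_angle; assert (1 <= INR (S j)) by (rewrite S_INR; pose proof (pos_INR j); lra).
  split; [apply Rinv_0_lt_compat; lra | apply Rinv_le_contravar; lra].
Qed.

Lemma arc_angle_in_0_PI j : 0 <= arc_angle j <= PI.
Proof. pose proof (arc_angle_bounds j); pose proof PI2_1; lra. Qed.

Lemma arc_chord_gt0 j : 0 < arc_chord j.
Proof.
  apply sqrt_lt_R0; pose proof (arc_angle_bounds j); pose proof PI_RGT_0.
  enough (cos (arc_angle j) < cos 0) by (rewrite cos_0 in *; lra).
  apply cos_decreasing_1; pose proof (arc_angle_in_0_PI j); lra.
Qed.

Lemma two_sub_two_cos_le a : -(PI / 2) <= a <= PI / 2 -> 2 - 2 * cos a <= a ^ 2.
Proof.
  intros Ha; destruct (cos_bound a 0) as [Hcos _]; [lra | lra |].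
  replace (cos_approx a (2 * 0 + 1)) with (1 - a ^ 2 / 2) in Hcos
    by (unfold cos_approx, cos_term; simpl; field).
  lra.
Qed.

Lemma arc_chord_le_angle j : arc_chord j <= arc_angle j.
Proof.
  pose proof (arc_angle_bounds j); pose proof PI2_1.
  unfold arc_chord; rewrite <- (sqrt_pow2 (arc_angle j)) at 2 by lra.
  apply sqrt_le_1_alt, two_sub_two_cos_le; lra.
Qed.

Lemma arc_chord_small eps : 0 < eps -> exists j, arc_chord j < eps.
Proof.
  intros He; destruct (archimed_cor1 eps He) as [N [HN HN0]].
  exists N; eapply Rle_lt_trans; [apply arc_chord_le_angle|]; eapply Rle_lt_trans; [|exact HN].
  assert (0 < INR N) by (apply lt_0_INR; lia).
  unfold arc_angle; rewrite S_INR; apply Rinv_le_contravar; lra.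
Qed.

Lemma acos_lt_cos x t : -1 <= x <= 1 -> 0 <= t <= PI -> (acos x < t <-> cos t < x).
Proof.
  intros Hx Ht; destruct (acos_bound x) as [A0 A1].
  rewrite <- (cos_acos x Hx) at 2; split; intros H.
  - apply cos_decreasing_1; lra.
  - destruct (Rlt_le_dec (acos x) t) as [|Hle]; [assumption|].
    assert (cos (acos x) <= cos t) by (apply cos_decr_1; lra); lra.
Qed.

Lemma Varc_chord j z w : Circ1 z -> (Varc j z w <-> Circ1 w /\ edist z w < arc_chord j).
Proof.
  intros Hz; pose proof (arc_angle_in_0_PI j) as Ht; unfold Varc, edist, arc_chord, dist2.
  split; intros [Hw H]; split; try assumption;
    destruct z as [a b], w as [c d]; unfold Circ1 in *; simpl in *;
    (assert (Hdot : -1 <= a * c + b * d <= 1)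
       by (pose proof (pow2_ge_0 (a * d - b * c)); split; nra)).
  - apply (acos_lt_cos _ _ Hdot Ht) in H; apply sqrt_lt_1_alt; split; nra.
  - apply (acos_lt_cos _ _ Hdot Ht); apply sqrt_lt_0_alt in H; nra.
Qed.

Lemma sqrt2_gt0 : 0 < sqrt 2.
Proof. apply sqrt_lt_R0; lra. Qed.

Lemma Circ1_Circ2_disjoint w : Circ1 w -> Circ2 w -> False.
Proof. unfold Circ1, Circ2; lra. Qed.

Lemma proj_Circ2 v : Circ1 v -> Circ2 (proj v).
Proof.
  destruct v as [a b]; unfold Circ1, Circ2, proj; simpl; intros H.
  pose proof (sqrt_sqrt 2 ltac:(lra)); nra.
Qed.

Definition unproj (w : pt) : pt := (fst w / sqrt 2, snd w / sqrt 2).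

Lemma proj_unproj w : proj (unproj w) = w.
Proof. destruct w; unfold proj, unproj; simpl; pose proof sqrt2_gt0; f_equal; field; lra. Qed.

Lemma unproj_proj v : unproj (proj v) = v.
Proof. destruct v; unfold proj, unproj; simpl; pose proof sqrt2_gt0; f_equal; field; lra. Qed.

Lemma proj_inj v v' : proj v = proj v' -> v = v'.
Proof. intros H; rewrite <- (unproj_proj v), <- (unproj_proj v'), H; reflexivity. Qed.

Lemma unproj_Circ1 w : Circ2 w -> Circ1 (unproj w).
Proof.
  destruct w as [a b]; unfold Circ1, Circ2, unproj; cbn [fst snd]; intros H.
  pose proof sqrt2_gt0; pose proof (sqrt_sqrt 2 ltac:(lra)).
  replace ((a / sqrt 2) ^ 2 + (b / sqrt 2) ^ 2) with ((a ^ 2 + b ^ 2) / (sqrt 2 * sqrt 2))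
    by (field; lra).
  rewrite H, H1; field.
Qed.

Lemma Unbhd_sub j z : subset (Unbhd j z) Xset.
Proof.
  intros w [[Hw _]|[v [[Hv _] [_ ->]]]]; [left | right; apply proj_Circ2]; assumption.
Qed.

Lemma Varc_center j z : Circ1 z -> Varc j z z.
Proof.
  intros Hz; apply Varc_chord; auto; rewrite edist_xx; split; [auto | apply arc_chord_gt0].
Qed.

Lemma Unbhd_center j z : Circ1 z -> Unbhd j z z.
Proof. left; apply Varc_center; auto. Qed.

Lemma Varc_sub j k z w u : Circ1 z -> Circ1 w -> edist z w + arc_chord k <= arc_chord j ->
  Varc k w u -> Varc j z u.
Proof.
  intros Hz Hw Hle Hu; apply Varc_chord in Hu as [Hu Hwu]; auto.
  apply Varc_chord; auto; split; auto.
  pose proof (edist_triangle z w u); lra.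
Qed.

Lemma Unbhd_open j z : Circ1 z -> X_open (Unbhd j z).
Proof.
  intros Hz; split; [apply Unbhd_sub|].
  intros w [Hw|[v [[Hv _] [_ ->]]]]; [| left; apply proj_Circ2; auto].
  assert (Hw1 : Circ1 w) by apply Hw.
  right; split; auto.
  destruct (classic (w = z)) as [->|Hwz]; [exists j; intros u Hu; exact Hu|].
  apply Varc_chord in Hw as [_ Hzw]; auto.
  pose proof (edist_gt0 _ _ Hwz).
  destruct (arc_chord_small (Rmin (arc_chord j - edist z w) (edist w z))) as [k Hk].
  { apply Rmin_glb_lt; lra. }
  assert (Hk1 : arc_chord k < arc_chord j - edist z w)
    by (eapply Rlt_le_trans; [exact Hk | apply Rmin_l]).
  assert (Hk2 : arc_chord k < edist w z) by (eapply Rlt_le_trans; [exact Hk | apply Rmin_r]).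
  exists k; intros u [Hu|[v [Hv [Hvw ->]]]].
  - left; apply (Varc_sub j k z w u); auto; lra.
  - right; exists v; split; [apply (Varc_sub j k z w v); auto; lra|]; split; auto.
    intros ->; apply Varc_chord in Hv as [_ Hv]; auto; lra.
Qed.

(** Both [w] itself and its radial preimage [unproj w] must be kept out of the arc. *)
Lemma Unbhd_avoid z w : Circ1 z -> w <> z -> exists j, ~ Unbhd j z w.
Proof.
  intros Hz Hwz; pose proof (edist_gt0 _ _ (not_eq_sym Hwz)) as Hd.
  assert (Hm : exists m, 0 < m /\ m <= edist z w /\ (unproj w <> z -> m <= edist z (unproj w))).
  { destruct (classic (unproj w = z)) as [E|E].
    - exists (edist z w); repeat split; [lra | lra | contradiction].
    - exists (Rmin (edist z w) (edist z (unproj w))); repeat split.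
      + apply Rmin_glb_lt; auto; apply edist_gt0; auto.
      + apply Rmin_l.
      + intros _; apply Rmin_r. }
  destruct Hm as [m [Hm0 [Hm1 Hm2]]].
  destruct (arc_chord_small m Hm0) as [j Hj]; exists j.
  intros [H|[v [Hv [Hvz E]]]].
  - apply Varc_chord in H as [_ H]; auto; lra.
  - rewrite E, unproj_proj in Hm2; apply Varc_chord in Hv as [_ Hv]; auto.
    specialize (Hm2 Hvz); lra.
Qed.

Lemma X_open_Xset : X_open Xset.
Proof.
  split; [intros x H; exact H|].
  intros z [Hz|Hz]; [right; split; auto; exists O; apply Unbhd_sub | left; auto].
Qed.

Lemma X_open_setD1 x : X_open (fun w => Xset w /\ w <> x).
Proof.
  split; [intros w [H _]; exact H|].
  intros z [[Hz|Hz] Hzx]; [right | left; auto]; split; auto.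
  destruct (Unbhd_avoid z x Hz (not_eq_sym Hzx)) as [j Hj].
  exists j; intros u Hu; split; [exact (Unbhd_sub _ _ _ Hu)|]; intros ->; contradiction.
Qed.

Lemma X_open_Circ2_point y : Circ2 y -> X_open (fun w => w = y).
Proof. intros Hy; split; [intros w ->; right; auto | intros z ->; left; auto]. Qed.

Definition cpt (t : R) : pt := (cos t, sin t).

Lemma cpt_Circ1 t : Circ1 (cpt t).
Proof. unfold Circ1, cpt; cbn [fst snd]; pose proof (sin2_cos2 t); unfold Rsqr in *; lra. Qed.

Lemma Circ1_angle w : Circ1 w -> exists t, 0 <= t <= 2 * PI /\ w = cpt t.
Proof.
  destruct w as [x y]; unfold Circ1, cpt; cbn [fst snd]; intros H.
  assert (Hx : -1 <= x <= 1) by (split; nra).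
  assert (E : 1 - x² = y ^ 2) by (unfold Rsqr; lra).
  destruct (acos_bound x); pose proof PI_RGT_0.
  destruct (Rle_lt_dec 0 y) as [Hy|Hy].
  - exists (acos x); split; [lra|].
    rewrite cos_acos, sin_acos, E, sqrt_pow2 by auto; reflexivity.
  - exists (2 * PI - acos x); split; [lra|].
    rewrite cos_minus, sin_minus, cos_2PI, sin_2PI, cos_acos, sin_acos, E by auto.
    replace (y ^ 2) with ((- y) ^ 2) by ring; rewrite sqrt_pow2 by lra.
    f_equal; ring.
Qed.

Lemma edist_cpt s s' : Rabs (s - s') <= PI / 2 -> edist (cpt s) (cpt s') <= Rabs (s - s').
Proof.
  intros Hs; unfold edist, dist2, cpt; cbn [fst snd].
  rewrite <- (sqrt_pow2 (Rabs (s - s'))) by apply Rabs_pos.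
  apply sqrt_le_1_alt; rewrite pow2_abs.
  replace ((cos s - cos s') ^ 2 + (sin s - sin s') ^ 2) with (2 - 2 * cos (s - s'))
    by (rewrite cos_minus; pose proof (sin2_cos2 s); pose proof (sin2_cos2 s');
        unfold Rsqr in *; nra).
  apply two_sub_two_cos_le; unfold Rabs in Hs; destruct Rcase_abs in Hs; lra.
Qed.

Lemma interval_finite_cover (a b : R) (G : R -> R -> Prop) :
  (forall t, a <= t <= b -> G t t) ->
  (forall t s, G t s -> exists d, 0 < d /\ forall s', Rabs (s' - s) < d -> G t s') ->
  exists l, (forall t, In t l -> a <= t <= b) /\
            forall s, a <= s <= b -> exists t, In t l /\ G t s.
Proof.
  intros Hcenter Hopen.
  assert (Hind : forall x, (exists y, a <= x <= b /\ G x y) -> a <= x <= b)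
    by (intros x [y [H _]]; exact H).
  destruct (compact_P3 a b (mkfamily _ (fun t s => a <= t <= b /\ G t s) Hind))
    as [D [Hcov [l Hl]]].
  - split.
    + intros x Hx; exists x; simpl; auto.
    + intros x s [Hx Hg]; destruct (Hopen x s Hg) as [d [Hd Hd']].
      exists (mkposreal d Hd); intros s' Hs'; simpl; auto.
  - exists l; split.
    + intros t Ht; apply Hl in Ht as [Ht _]; exact Ht.
    + intros s Hs; destruct (Hcov s Hs) as [t [[Ht Hg] HD]].
      exists t; split; [apply Hl; split | ]; auto.
Qed.

Lemma Circ1_arc_cover (g : pt -> nat) :
  exists l, (forall z, In z l -> Circ1 z) /\
            forall w, Circ1 w -> exists z, In z l /\ Varc (g z) z w.
Proof.
  destruct (interval_finite_cover 0 (2 * PI) (fun t s => Varc (g (cpt t)) (cpt t) (cpt s)))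
    as [l [_ Hl]].
  - intros t _; apply Varc_center, cpt_Circ1.
  - intros t s Hts; apply Varc_chord in Hts as [_ Hd]; [|apply cpt_Circ1].
    set (eps := arc_chord (g (cpt t)) - edist (cpt t) (cpt s)).
    exists (Rmin eps (PI / 2)); split; [apply Rmin_glb_lt; unfold eps; pose proof PI_RGT_0; lra|].
    intros s' Hs'; apply Varc_chord; [apply cpt_Circ1|]; split; [apply cpt_Circ1|].
    pose proof (Rmin_l eps (PI / 2)); pose proof (Rmin_r eps (PI / 2)).
    rewrite Rabs_minus_sym in Hs'.
    assert (edist (cpt s) (cpt s') <= Rabs (s - s')) by (apply edist_cpt; lra).
    pose proof (edist_triangle (cpt t) (cpt s) (cpt s')); unfold eps in *; lra.
  - exists (map cpt l); split.
    + intros z Hz; apply in_map_iff in Hz as [t [<- _]]; apply cpt_Circ1.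
    + intros w Hw; destruct (Circ1_angle w Hw) as [s [Hs ->]].
      destruct (Hl s Hs) as [t [Ht Hts]].
      exists (cpt t); split; [apply in_map|]; assumption.
Qed.

Lemma compact_set_point {T : Type} (O : (T -> Prop) -> Prop) (y : T) :
  compact_set O (fun w => w = y).
Proof.
  intros F _ HF; destruct (HF y eq_refl) as [U [HU Uy]].
  exists (U :: nil); split.
  - intros V [<-|[]]; exact HU.
  - intros x ->; exists U; split; [left|]; auto.
Qed.

Lemma compact_set_union {T : Type} (O : (T -> Prop) -> Prop) (A B : T -> Prop) :
  compact_set O A -> compact_set O B -> compact_set O (fun x => A x \/ B x).
Proof.
  intros HA HB F HO HF.
  destruct (HA F HO (fun x Hx => HF x (or_introl Hx))) as [lA [HlA HcA]].
  destruct (HB F HO (fun x Hx => HF x (or_intror Hx))) as [lB [HlB HcB]].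
  exists (lA ++ lB); split.
  - intros U HU; apply in_app_or in HU as [HU|HU]; auto.
  - intros x [Hx|Hx]; [destruct (HcA x Hx) as [U [HU Ux]] | destruct (HcB x Hx) as [U [HU Ux]]];
      exists U; split; auto; apply in_or_app; auto.
Qed.

Lemma open_cover_Circ1_nbhds (F : (pt -> Prop) -> Prop) :
  (forall U, F U -> X_open U) -> (forall x, Circ1 x -> exists U, F U /\ U x) ->
  exists (j : pt -> nat) (U : pt -> pt -> Prop),
    forall z, Circ1 z -> F (U z) /\ subset (Unbhd (j z) z) (U z).
Proof.
  intros HO HC.
  assert (Hz : forall z, exists p : nat * (pt -> Prop),
             Circ1 z -> F (snd p) /\ subset (Unbhd (fst p) z) (snd p)).
  { intros z; destruct (classic (Circ1 z)) as [Hz|Hz]; [|exists (O, fun _ => False); tauto].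
    destruct (HC z Hz) as [U [HU Uz]].
    destruct (proj2 (HO U HU) z Uz) as [H2|[_ [j Hj]]].
    - destruct (Circ1_Circ2_disjoint z Hz H2).
    - exists (j, U); auto. }
  destruct (choice _ Hz) as [p Hp].
  exists (fun z => fst (p z)), (fun z => snd (p z)); exact Hp.
Qed.

Lemma compact_Circ1 : compact_set X_open Circ1.
Proof.
  intros F HO HC.
  destruct (open_cover_Circ1_nbhds F HO HC) as [j [U HU]].
  destruct (Circ1_arc_cover j) as [l [Hl Hcov]].
  exists (map U l); split.
  - intros V HV; apply in_map_iff in HV as [z [<- Hz]]; apply HU, Hl, Hz.
  - intros w Hw; destruct (Hcov w Hw) as [z [Hz Hzw]].
    exists (U z); split; [apply in_map; auto | apply (HU z (Hl z Hz)); left; exact Hzw].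
Qed.

Lemma compact_X : compact_set X_open Xset.
Proof.
  intros F HO HC.
  destruct (open_cover_Circ1_nbhds F HO (fun x Hx => HC x (or_introl Hx))) as [j [U HU]].
  destruct (Circ1_arc_cover j) as [l [Hl Hcov]].
  assert (HV : forall w, exists V, Xset w -> F V /\ V w).
  { intros w; destruct (classic (Xset w)) as [Hw|Hw].
    - destruct (HC w Hw) as [V HV]; exists V; auto.
    - exists (fun _ => False); tauto. }
  destruct (choice _ HV) as [V HVp].
  exists (map U l ++ map (fun z => V (proj z)) l); split.
  - intros W HW; apply in_app_or in HW as [HW|HW]; apply in_map_iff in HW as [z [<- Hz]].
    + apply HU, Hl, Hz.
    + apply HVp; right; apply proj_Circ2, Hl, Hz.
  - intros w [Hw|Hw].
    + destruct (Hcov w Hw) as [z [Hz Hzw]].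
      exists (U z); split; [apply in_or_app; left; apply in_map; auto|].
      apply (HU z (Hl z Hz)); left; exact Hzw.
    + destruct (Hcov (unproj w) (unproj_Circ1 w Hw)) as [z [Hz Hzw]].
      destruct (classic (unproj w = z)) as [<-|Hwz].
      * exists (V (proj (unproj w))); split.
        -- apply in_or_app; right; apply (in_map (fun z => V (proj z))); auto.
        -- rewrite proj_unproj; apply HVp; right; exact Hw.
      * exists (U z); split; [apply in_or_app; left; apply in_map; auto|].
        apply (HU z (Hl z Hz)); right; exists (unproj w); rewrite proj_unproj; auto.
Qed.

Lemma saturated_of_T1 {T : Type} (S : T -> Prop) (O : (T -> Prop) -> Prop) (K : T -> Prop) :
  O S -> (forall x, O (fun w => S w /\ w <> x)) -> subset K S -> saturated O K.
Proof.
  intros HS HT1 HK x Hx; apply NNPP; intros HKx.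
  refine (proj2 (Hx (fun w => S w /\ w <> x) (HT1 x) _) eq_refl).
  intros w Hw; split; [auto | intros ->; contradiction].
Qed.

Lemma KX_of_compact (K : pt -> Prop) :
  subset K Xset -> (exists x, K x) -> compact_set X_open K -> KX Xset X_open K.
Proof.
  intros HK Hne Hc; repeat split; auto.
  apply (saturated_of_T1 Xset); [apply X_open_Xset | apply X_open_setD1 | exact HK].
Qed.

Lemma PS_carrier_Circ1 : PS_carrier Circ1.
Proof.
  apply KX_of_compact; [intros w; left; auto | | apply compact_Circ1].
  exists (1, 0); unfold Circ1; simpl; ring.
Qed.

Lemma PS_carrier_Circ1_add y : Xset y -> PS_carrier (fun w => Circ1 w \/ w = y).
Proof.
  intros Hy; apply KX_of_compact.
  - intros w [Hw| ->]; [left|]; auto.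
  - exists y; auto.
  - apply compact_set_union; [apply compact_Circ1 | apply compact_set_point].
Qed.

Lemma separate_Circ1 x y : Circ1 x -> Xset y -> x <> y ->
  exists U V, X_open U /\ X_open V /\ U x /\ V y /\ (forall z, U z -> V z -> False).
Proof.
  intros Hx [Hy|Hy] Hxy.
  - destruct (arc_chord_small (edist x y / 2)) as [k Hk].
    { pose proof (edist_gt0 _ _ Hxy); lra. }
    exists (Unbhd k x), (Unbhd k y).
    split; [apply Unbhd_open; auto|]; split; [apply Unbhd_open; auto|].
    split; [apply Unbhd_center; auto|]; split; [apply Unbhd_center; auto|].
    assert (Harcs : forall z, Varc k x z -> Varc k y z -> False).
    { intros z H1 H2; apply Varc_chord in H1 as [_ H1]; apply Varc_chord in H2 as [_ H2]; auto.
      pose proof (edist_triangle x z y); rewrite (edist_sym z y) in *; lra. }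
    intros z [H1|[v [H1 [_ ->]]]] [H2|[v' [H2 [_ E]]]].
    + exact (Harcs z H1 H2).
    + subst z; exact (Circ1_Circ2_disjoint _ (proj1 H1) (proj_Circ2 _ (proj1 H2))).
    + exact (Circ1_Circ2_disjoint _ (proj1 H2) (proj_Circ2 _ (proj1 H1))).
    + apply proj_inj in E; subst v'; exact (Harcs v H1 H2).
  - destruct (Unbhd_avoid x y Hx (not_eq_sym Hxy)) as [j Hj].
    exists (Unbhd j x), (fun w => w = y).
    split; [apply Unbhd_open; auto|]; split; [apply X_open_Circ2_point; auto|].
    split; [apply Unbhd_center; auto|]; split; [reflexivity|].
    intros z Hz ->; contradiction.
Qed.

Lemma hausdorff_X : hausdorff Xset X_open.
Proof.
  intros x y [Hx|Hx] Hy Hxy; [apply separate_Circ1; auto|].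
  destruct Hy as [Hy|Hy].
  - destruct (separate_Circ1 y x Hy (or_intror Hx) (not_eq_sym Hxy))
      as [U [V [HU [HV [Uy [Vx HUV]]]]]].
    exists V, U; do 4 (split; [assumption|]); intros z Vz Uz; exact (HUV z Uz Vz).
  - exists (fun w => w = x), (fun w => w = y).
    split; [apply X_open_Circ2_point; auto|]; split; [apply X_open_Circ2_point; auto|].
    do 2 (split; [reflexivity|]); intros z -> ->; auto.
Qed.

Lemma first_countable_X : first_countable Xset X_open.
Proof.
  intros x [Hx|Hx].
  - exists (fun n => Unbhd n x); split.
    + intros n; split; [apply Unbhd_sub|].
      exists (Unbhd n x); split; [apply Unbhd_open; auto|].
      split; [apply Unbhd_center; auto | intros w Hw; exact Hw].
    + intros U [_ HU] Ux; destruct (HU x Ux) as [H2|[_ [j Hj]]]; [|exists j; exact Hj].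
      destruct (Circ1_Circ2_disjoint x Hx H2).
  - exists (fun _ w => w = x); split.
    + intros n; split; [intros w ->; right; auto|].
      exists (fun w => w = x); split; [apply X_open_Circ2_point; auto|].
      split; [reflexivity | intros w Hw; exact Hw].
    + intros U _ Ux; exists O; intros w ->; exact Ux.
Qed.

Lemma box_smyth_open {T : Type} (S : T -> Prop) (O : (T -> Prop) -> Prop) (U : T -> Prop) :
  O U -> smyth_open S O (box S O U).
Proof. intros HU K HK; exists U; split; [exact HU | split; [exact HK | intros L HL; exact HL]]. Qed.

Lemma smyth_nbhd_box {T : Type} (S : T -> Prop) (O : (T -> Prop) -> Prop) K N :
  nbhd (KX S O) (smyth_open S O) K N ->
  exists U, O U /\ subset K U /\ subset (box S O U) N.
Proof.
  intros [_ [W [HW [WK HWN]]]]; destruct (HW K WK) as [U [HU [[_ HKU] HUW]]].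
  exists U; split; [exact HU | split; [exact HKU | intros L HL; apply HWN, HUW, HL]].
Qed.

Lemma open_Circ1_cofinite U : X_open U -> subset Circ1 U ->
  exists l : list pt, forall y, Circ2 y -> ~ U y -> In y l.
Proof.
  intros HU HC.
  set (F := fun V : pt -> Prop => V = U \/ exists y, Circ2 y /\ V = (fun w => w = y)).
  destruct (compact_X F) as [lV [HlV Hcov]].
  - intros V [->|[y [Hy ->]]]; [exact HU | apply X_open_Circ2_point; auto].
  - intros w [Hw|Hw].
    + exists U; split; [left|apply HC]; auto.
    + exists (fun z => z = w); split; [right; exists w|]; auto.
  - assert (Hpick : forall V : pt -> Prop, exists p, (exists w, V w) -> V p).
    { intros V; destruct (classic (exists w, V w)) as [[w Hw]|N];
        [exists w | exists (0, 0)]; tauto. }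
    destruct (choice _ Hpick) as [pick Hpk].
    exists (map pick lV); intros y Hy Uy.
    destruct (Hcov y (or_intror Hy)) as [V [HV Vy]].
    destruct (HlV V HV) as [->|[y' [_ ->]]]; [contradiction|]; subst y'.
    replace y with (pick (fun w => w = y)) by (apply Hpk; exists y; reflexivity).
    apply in_map, HV.
Qed.

(** Repeated trisection of [[0, 1]], at step [m] keeping an outer third that avoids [b m]. *)
Fixpoint trisect (b : nat -> R) (m : nat) : R * R :=
  match m with
  | O => (0, 1)
  | S m' => let p := trisect b m' in
      if Rle_dec (b m') ((fst p + snd p) / 2)
      then (fst p + 2 * (snd p - fst p) / 3, snd p)
      else (fst p, fst p + (snd p - fst p) / 3)
  end.

Lemma trisect_lt b m : fst (trisect b m) < snd (trisect b m).
Proof. induction m; simpl; [|destruct Rle_dec; cbn [fst snd]]; lra. Qed.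

Lemma trisect_step b m :
  fst (trisect b m) <= fst (trisect b (S m)) /\ snd (trisect b (S m)) <= snd (trisect b m) /\
  (b m < fst (trisect b (S m)) \/ snd (trisect b (S m)) < b m).
Proof. pose proof (trisect_lt b m); simpl; destruct Rle_dec; cbn [fst snd]; lra. Qed.

Lemma trisect_mono b m n : (m <= n)%nat ->
  fst (trisect b m) <= fst (trisect b n) /\ snd (trisect b n) <= snd (trisect b m).
Proof. induction 1 as [|n _ IH]; [lra|]; pose proof (trisect_step b n); lra. Qed.

Lemma trisect_fst_le_snd b m n : fst (trisect b m) <= snd (trisect b n).
Proof.
  pose proof (trisect_mono b m (Nat.max m n) (Nat.le_max_l _ _)).
  pose proof (trisect_mono b n (Nat.max m n) (Nat.le_max_r _ _)).
  pose proof (trisect_lt b (Nat.max m n)); lra.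
Qed.

Lemma unit_interval_not_seq (b : nat -> R) : exists u, 0 <= u <= 1 /\ forall m, u <> b m.
Proof.
  destruct (completeness (fun x => exists m, x = fst (trisect b m))) as [u [Hub Hlub]].
  - exists 1; intros x [m ->]; exact (trisect_fst_le_snd b m O).
  - exists 0, O; reflexivity.
  - assert (Hlo : forall m, fst (trisect b m) <= u) by (intros m; apply Hub; exists m; auto).
    assert (Hhi : forall n, u <= snd (trisect b n))
      by (intros n; apply Hlub; intros x [m ->]; apply trisect_fst_le_snd).
    exists u; split; [split; [exact (Hlo O) | exact (Hhi O)]|].
    intros m E; pose proof (trisect_step b m); pose proof (Hlo (S m)); pose proof (Hhi (S m)); lra.
Qed.

Lemma Circ2_not_countable_union_lists (L : nat -> list pt) :
  exists y, Circ2 y /\ forall n, ~ In y (L n).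
Proof.
  destruct (unit_interval_not_seq
              (fun m => fst (nth (snd (of_nat m)) (L (fst (of_nat m))) (0, 0)))) as [u [Hu Hm]].
  exists (u, sqrt (2 - u ^ 2)); split.
  - unfold Circ2; cbn [fst snd]; rewrite pow2_sqrt by nra; ring.
  - intros n Hin; destruct (In_nth (L n) _ (0, 0) Hin) as [k [_ Hk]].
    apply (Hm (to_nat (n, k))); rewrite cancel_of_to; cbn [fst snd]; rewrite Hk; reflexivity.
Qed.

Lemma Circ1_no_countable_nbhd_base : ~ has_countable_nbhd_base PS_carrier PS_open Circ1.
Proof.
  intros [B [HBnbhd HBbase]].
  destruct (choice _ (fun n => smyth_nbhd_box _ _ _ _ (HBnbhd n))) as [U HU].
  assert (Hcofin : forall n, exists l, forall y, Circ2 y -> ~ U n y -> In y l)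
    by (intros n; destruct (HU n) as [HUo [HC1 _]]; exact (open_Circ1_cofinite _ HUo HC1)).
  destruct (choice _ Hcofin) as [L HL].
  destruct (Circ2_not_countable_union_lists L) as [y [Hy HyL]].
  assert (HyU : forall n, U n y)
    by (intros n; apply NNPP; intros Hn; exact (HyL n (HL n y Hy Hn))).
  set (Uy := fun w => Xset w /\ w <> y).
  assert (HC1y : subset Circ1 Uy)
    by (intros w Hw; split; [left; exact Hw | intros ->; exact (Circ1_Circ2_disjoint y Hw Hy)]).
  destruct (HBbase (box Xset X_open Uy)) as [n Hn].
  - apply box_smyth_open, X_open_setD1.
  - split; [apply PS_carrier_Circ1 | exact HC1y].
  - destruct (HU n) as [_ [HC1 HboxB]].
    assert (Hbox : box Xset X_open (U n) (fun w => Circ1 w \/ w = y)).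
    { split; [apply PS_carrier_Circ1_add; right; exact Hy|].
      intros w [Hw| ->]; [apply HC1, Hw | apply HyU]. }
    destruct (Hn _ (HboxB _ Hbox)) as [_ HKUy].
    exact (proj2 (HKUy y (or_intror eq_refl)) eq_refl).
Qed.

Theorem mainTheorem4 :
  compact_set X_open Xset /\
  hausdorff Xset X_open /\
  first_countable Xset X_open /\
  PS_carrier Circ1 /\
  ~ first_countable PS_carrier PS_open /\
  ~ has_countable_nbhd_base PS_carrier PS_open Circ1.
Proof.
  split; [exact compact_X|].
  split; [exact hausdorff_X|].
  split; [exact first_countable_X|].
  split; [exact PS_carrier_Circ1|].
  split; [|exact Circ1_no_countable_nbhd_base].
  intros Hfc; exact (Circ1_no_countable_nbhd_base (Hfc Circ1 PS_carrier_Circ1)).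
Qed.
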